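(* Let $F$ be a $4$-regular graph, let $E\subseteq E(F)$ be based in $F$, let $C$ be an oriented Euler system of $F$, let $D$ be a directed version of $F$, and let $\mathbf o$ be a transitional orientation of $F$. Then for each transversal $T$ of $\mathfrak T(F)$, the submatrix of $\mathrm{CM}(F,\Gamma_{E,C},D)\cdot\Delta_{D,\mathbf o}$ formed by the columns in $T$ has determinant $-1$, $0$, or $1$.
   Context: Graphs: $G=(V,H,E,\epsilon)$ with finite sets of vertices $V$ and half-edges $H$, a partition $E$ of $H$ into unordered pairs (edges), and $\epsilon:H\to V$; loops and multiple edges allowed. $E'\subseteq E(G)$ is based in $G$ if it contains exactly one edge of each connected component of $G$. A directed version orders each edge as (tail, head). A single transition is an unordered pair of distinct half-edges incident with a common vertex; a directed single transition is such an ordered pair. A closed walk is a sequence $((h_1,h_2),\dots,(h_{n-1},h_n))$ of directed single transitions with $\{h_2,h_3\},\{h_4,h_5\},\dots,\{h_n,h_1\}$ edges, up to cyclic shift. $\sigma(D,W)\in\mathbb Z^{E}$ counts, at each edge, traversals by $W$ along its direction in $D$ minus traversals against it. An oriented circuit is a nonempty closed walk in which each half-edge occurs at most once. For a set $\Gamma$ of closed walks, $\mathrm{CM}(G,\Gamma,D)$ is the $\Gamma\times E(G)$ matrix whose row indexed by $W$ is $\sigma(D,W)$ (rows/columns unordered; determinants are defined up to sign). $F$ is $4$-regular if every vertex is incident with exactly $4$ half-edges. A transition at $v$ is a partition of the four half-edges at $v$ into two single transitions; $\mathfrak T(F)$ is the set of transitions, and a transversal of $\mathfrak T(F)$ contains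 exactly one transition at each vertex. A transitional orientation $\mathbf o$ assigns to each transition $t$ one of its two single transitions $\mathbf o(t)$. $\Delta_{D,\mathbf o}$ is the $E(F)\times\mathfrak T(F)$ matrix over $\mathbb Q$ whose $(e,t)$ entry is $1$ if $e\cap\mathbf o(t)=\{h\}$ with $h$ the tail of $e$ in $D$, $-1$ if $e\cap\mathbf o(t)=\{h\}$ with $h$ the head, and $0$ otherwise. An oriented Euler system of $F$ consists of one oriented Eulerian circuit for each connected component of $F$; it visits each vertex exactly twice. For a vertex $v$, the oriented circuit induced by $C$ at $v$ based on $E$ is the segment from $v$ back to $v$ of the oriented Eulerian circuit of the component of $v$ that does not traverse the edge of $E$ in that component. $\Gamma_{E,C}$ is the set of these oriented circuits over all $v\in V(F)$. *)

From mathcomp Require Import all_boot all_order all_algebra.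
Set Implicit Arguments. Unset Strict Implicit. Unset Printing Implicit Defensive.
Import GRing.Theory.
Local Open Scope ring_scope.

Section Graphs.
Variables (V H : finType).
(* A graph G = (V, H, Ed, eps): Ed is a set of blocks of half-edges. *)
Variables (Ed : {set {set H}}) (eps : H -> V).

Definition is_graph : Prop :=
  partition Ed [set: H] /\ forall e, e \in Ed -> #|e| = 2.

Definition hat (v : V) : {set H} := [set h | eps h == v].

Definition four_regular : Prop := forall v, #|hat v| = 4.

Definition adj : rel V := fun u w =>
  [exists e in Ed, exists h in e, exists h' in e,
     [&& h != h', eps h == u & eps h' == w]].

Definition edge_in_comp (e : {set H}) (v : V) : bool :=
  [exists h in e, connect adj (eps h) v].

Definition based (E' : {set {set H}}) : Prop :=
  E' \subset Ed /\ forall v, #|[set e in E' | edge_in_comp e v]| = 1.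

(* A directed version: D is the set of tails, exactly one per edge. *)
Definition directed_version (D : {set H}) : Prop :=
  forall e, e \in Ed -> #|e :&: D| = 1.

(* Walks: a closed walk ((h1,h2),...,(h_{n-1},h_n)) is stored as the sequence
   of its directed single transitions (h1,h2), (h3,h4), ...; it is considered
   up to cyclic shift (all notions below are invariant under rotation). *)
Definition dsingle (p : H * H) : bool := (p.1 != p.2) && (eps p.1 == eps p.2).

(* edge traversals of a closed walk: (h2,h3), (h4,h5), ..., (h_n,h_1),
   each traversed from its first to its second half-edge *)
Definition trav (W : seq (H * H)) : seq (H * H) :=
  [seq (p.1.2, p.2.1) | p <- zip W (rot 1 W)].

Definition closed_walk (W : seq (H * H)) : bool :=
  all dsingle W && all (fun q => [set q.1; q.2] \in Ed) (trav W).

Definition hedges (W : seq (H * H)) : seq H := flatten [seq [:: p.1; p.2] | p <- W].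

Definition oriented_circuit (W : seq (H * H)) : bool :=
  [&& closed_walk W, W != [::] & uniq (hedges W)].

Definition sigma (D : {set H}) (W : seq (H * H)) (e : {set H}) : rat :=
  (count (fun q => ([set q.1; q.2] == e) && (q.1 \in D)) (trav W))%:R
  - (count (fun q => ([set q.1; q.2] == e) && (q.1 \notin D)) (trav W))%:R.

(* An oriented Euler system: one oriented Eulerian circuit per component.
   Every half-edge occurs exactly once overall, and each component is met by
   exactly one circuit of C. *)
Definition euler_system (C : seq (seq (H * H))) : Prop :=
  [/\ forall W, W \in C -> oriented_circuit W,
      perm_eq (flatten [seq hedges W | W <- C]) (enum H)
    & forall v, count (fun W => has (fun p => connect adj (eps p.1) v) W) C = 1].

(* W' is (a representative, up to cyclic shift, of) the oriented circuit
   induced by C at v based on E: choose the Euler circuit W of C, rotate it (R) so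
   that its first transition p0 = W'_0 is at v, let pk = W'_k be the other transition at v;
   the segment from v back to v is the closed walk
   (fst W'_k, snd W'_0), W'_1, ..., W'_{k-1}; it must not traverse the edge
   of E in the component of v. *)
Definition induced_circuit (E : {set {set H}}) (C : seq (seq (H * H)))
    (v : V) (W' : seq (H * H)) : Prop :=
  exists W, W \in C /\ exists r k p0 pk,
    let R := rot r W in
    [/\ (0 < k < size R)%N,
        ohead R = Some p0 /\ ohead (drop k R) = Some pk,
        eps p0.1 = v /\ eps pk.1 = v,
        W' = (pk.1, p0.2) :: take k.-1 (drop 1 R)
      & forall e0, e0 \in E -> edge_in_comp e0 v ->
          all (fun q => [set q.1; q.2] != e0) (trav W')].

Definition CM (D : {set H}) (Gam : V -> seq (H * H)) (v : V) (e : {set H}) : rat :=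
  sigma D (Gam v) e.

Definition trans_at (t : {set {set H}}) (v : V) : bool :=
  partition t (hat v) && [forall b in t, #|b| == 2].

Definition is_transition (t : {set {set H}}) : bool := [exists v, trans_at t v].

Definition trans_orientation (o : {set {set H}} -> {set H}) : Prop :=
  forall t, is_transition t -> o t \in t.

Definition Delta (D : {set H}) (o : {set {set H}} -> {set H})
    (e : {set H}) (t : {set {set H}}) : rat :=
  if [exists h in D, e :&: o t == [set h]] then 1
  else if [exists h in ~: D, e :&: o t == [set h]] then -1 else 0.

Definition CMDelta (D : {set H}) (Gam : V -> seq (H * H))
    (o : {set {set H}} -> {set H}) (v : V) (t : {set {set H}}) : rat :=
  \sum_(e in Ed) CM D Gam v e * Delta D o e t.

Definition transversalT (T : {set {set {set H}}}) : Prop :=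
  (forall t, t \in T -> is_transition t) /\
  forall v, #|[set t in T | trans_at t v]| = 1.

Definition tcol (T : {set {set {set H}}}) (v : V) : option {set {set H}} :=
  [pick t in T | trans_at t v].

(* the square submatrix of CM * Delta formed by the columns in T
   (rows and columns ordered via the enumeration of V; the column of the
   transition of T at vertex v comes in position v) *)
Definition subCMDelta (D : {set H}) (Gam : V -> seq (H * H))
    (o : {set {set H}} -> {set H}) (T : {set {set {set H}}}) : 'M[rat]_#|V| :=
  \matrix_(i, j) match tcol T (enum_val j) with
                 | Some t => CMDelta D Gam o (enum_val i) t
                 | None => 0 end.

End Graphs.

From mathcomp Require Import all_boot all_order all_algebra.
From mathcomp Require Import zify.

(* Rotate each Euler circuit of C to start just after its edge of E and
   concatenate them into one sequence P of the 2n visits to vertices.  The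
   circuit induced at v avoids the edge of E, so it is the segment of P between
   the two visits to v, and row v of CM * Delta (restricted to T) is the sum,
   over that segment, of the differences e(leaving half-edge) - e(next entering
   half-edge), where e(h) is the unit vector of the vertex of h when h lies in
   the single transition chosen by o at that vertex, and 0 otherwise.  Such a
   matrix of segment sums is the upper-left block of a block-triangular product
   Q * L * F * B with L triangular with unit diagonal (prefix sums) and Q, F, B
   incidence-like matrices (each row a difference of two unit vectors, one unit
   vector, or zero), whose determinants are -1, 0 or 1. *)

Set Implicit Arguments. Unset Strict Implicit. Unset Printing Implicit Defensive.
Import GRing.Theory.

Section IncidenceMatrix.
Variable R : fieldType.
Local Open Scope ring_scope.

Definition sign_or_zero (x : R) : Prop := x = -1 \/ x = 0 \/ x = 1.

Lemma sign_or_zeroM x y : sign_or_zero x -> sign_or_zero y -> sign_or_zero (x * y).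
Proof.
move=> [->|[->|->]] [->|[->|->]];
  by rewrite /sign_or_zero ?(mulr0, mul0r, mulrNN, mulr1, mul1r); auto.
Qed.

Lemma sign_or_zero_signr k : sign_or_zero ((-1) ^+ k).
Proof. by rewrite -signr_odd; case: (odd k); [left | right; right]. Qed.

(* Up to transposition, the incidence matrix of a digraph whose arc [i] may lack
   an endpoint ([None]). *)
Definition incidence_mx m n (a b : 'I_m -> option 'I_n) : 'M[R]_(m, n) :=
  \matrix_(i, j) ((a i == Some j)%:R - (b i == Some j)%:R).

Lemma sum_eq_Some n (o : option 'I_n) (f : 'I_n -> R) :
  \sum_k (o == Some k)%:R * f k = oapp f 0 o.
Proof.
case: o => [p|] /=; last by rewrite big1 // => k _; rewrite mul0r.
rewrite (bigD1 p) //= eqxx mul1r big1 ?addr0 // => k /negbTE nkp.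
by rewrite (inj_eq Some_inj) eq_sym nkp mul0r.
Qed.

Lemma mul_incidence_mx m n p (a b : 'I_m -> option 'I_n) (B : 'M[R]_(n, p)) i c :
  (incidence_mx a b *m B) i c = oapp (B^~ c) 0 (a i) - oapp (B^~ c) 0 (b i).
Proof.
rewrite mxE; under eq_bigr do rewrite mxE mulrBl.
by rewrite sumrB !sum_eq_Some.
Qed.

Lemma det_incidence_mx_eq0 m (a b : 'I_m.+1 -> option 'I_m.+1) :
  (forall i, a i != None /\ b i != None) -> \det (incidence_mx a b) = 0.
Proof.
move=> ab_full; apply/eqP; rewrite -det_tr; apply/det0P.
exists (const_mx 1); first by apply/eqP => /matrixP/(_ 0 0); rewrite !mxE; apply/eqP/oner_neq0.
apply/matrixP => k i; rewrite -[const_mx 1]trmxK -trmx_mul [LHS]mxE mul_incidence_mx mxE.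
by case: (ab_full i); case: (a i) => [?|] // _; case: (b i) => [?|] // _ /=; rewrite !mxE subrr.
Qed.

Lemma incidence_mx_minor m n (a b : 'I_m.+1 -> option 'I_n.+1) i j :
  row' i (col' j (incidence_mx a b)) =
  incidence_mx (fun k => obind (unlift j) (a (lift i k)))
               (fun k => obind (unlift j) (b (lift i k))).
Proof.
have unlift_Some (o : option 'I_n.+1) l : (obind (unlift j) o == Some l) = (o == Some (lift j l)).
  case: o => [x|] //=; rewrite (inj_eq Some_inj); case: unliftP => [y ->|->] /=.
    by rewrite (inj_eq Some_inj) (inj_eq (@lift_inj _ j)).
  by apply/esym/negbTE; rewrite neq_lift.
by apply/matrixP => k l; rewrite !mxE !unlift_Some.
Qed.

(* Expand along a row with a missing endpoint; if there is none, the columns sum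
   to zero. *)
Lemma det_incidence_mx m (a b : 'I_m -> option 'I_m) :
  sign_or_zero (\det (incidence_mx a b)).
Proof.
elim: m a b => [|m IHm] a b; first by rewrite det_mx00; do 2 right.
have [i short_i|full] := pickP (fun i => (a i == None) || (b i == None)); last first.
  right; left; apply: det_incidence_mx_eq0 => i.
  by apply/andP; rewrite -negb_or; apply/negbT/full.
set A := incidence_mx a b.
have [j0 [s [sign_s rowE]]] :
    exists j0 s, sign_or_zero s /\ forall j, A i j = s * (j == j0)%:R.
  move: short_i; case Ea: (a i) => [x|]; case Eb: (b i) => [y|] //= _.
  - exists x, 1; split=> [|j]; first by do 2 right.
    by rewrite mxE Ea Eb /= subr0 mul1r (inj_eq Some_inj) eq_sym.
  - exists y, (-1); split=> [|j]; first by left.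
    by rewrite mxE Ea Eb /= sub0r mulN1r (inj_eq Some_inj) eq_sym.
  - exists ord0, 0; split=> [|j]; first by right; left.
    by rewrite mxE Ea Eb subrr mul0r.
rewrite (expand_det_row _ i) (bigD1 j0) //= big1 ?addr0 => [|j /negbTE nj];
  last by rewrite rowE nj mulr0 mul0r.
rewrite rowE eqxx mulr1 /cofactor incidence_mx_minor.
by apply: sign_or_zeroM => //; apply: sign_or_zeroM; [apply: sign_or_zero_signr | apply: IHm].
Qed.

End IncidenceMatrix.

Arguments incidence_mx {R m n} a b.

(* Positions [l] of a sequence visit vertices [atv l]; [sel_in l] and [sel_out l]
   tell whether the half-edges entering and leaving at [l] are selected, and
   [ii v <= jj v] are two visits to [v]. *)
Section SegmentMatrix.
Variables (R : fieldType) (n : nat).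
Variables (atv : nat -> 'I_n) (sel_in sel_out : nat -> bool) (ii jj : 'I_n -> 'I_(n + n)).
Hypotheses (ii_le_jj : forall v, (ii v <= jj v)%N)
  (atv_ii : forall v, atv (ii v) = v) (atv_jj : forall v, atv (jj v) = v).
Local Open Scope ring_scope.

Definition segment_mx : 'M[R]_n := \matrix_(v, w)
  \sum_(ii v <= l < jj v)
     (((atv l == w) && sel_out l)%:R - ((atv l.+1 == w) && sel_in l.+1)%:R).

Local Notation N := (n + n)%N.

Definition side_col (x : 'I_n) (b : bool) : 'I_N := if b then lshift n x else rshift n x.

Lemma side_col_lshift x b w : (side_col x b == lshift n w) = (x == w) && b.
Proof. by case: b; rewrite /side_col eq_shift ?andbT ?andbF. Qed.

Lemma side_col_rshift x b w : (side_col x b == rshift n w) = (x == w) && ~~ b.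
Proof. by case: b; rewrite /side_col eq_shift ?andbT ?andbF. Qed.

Definition step (g : nat) (c : 'I_N) : R :=
  (if g is g'.+1 then (side_col (atv g') (sel_out g') == c)%:R else 0)
  - (side_col (atv g) (sel_in g) == c)%:R.

Definition step_mx : 'M[R]_N := \matrix_(g, c) step g c.

Lemma step_mx_incidence : step_mx = incidence_mx
  (fun g : 'I_N => if (g : nat) is g'.+1 then Some (side_col (atv g') (sel_out g')) else None)
  (fun g : 'I_N => Some (side_col (atv g) (sel_in g))).
Proof.
apply/matrixP => g c; rewrite !mxE /step (inj_eq Some_inj).
by case: (g : nat) => [|g'] //=; rewrite (inj_eq Some_inj).
Qed.

Definition prefix_mx : 'M[R]_N := \matrix_(l, g) (g <= l)%N%:R.

Lemma det_prefix_mx : \det prefix_mx = 1.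
Proof.
rewrite det_trig; last by apply/is_trig_mxP => i j ij; rewrite mxE leqNgt ij.
by rewrite big1 // => i _; rewrite mxE leqnn.
Qed.

Lemma prefix_stepE (l : 'I_N) c :
  (prefix_mx *m step_mx) l c = \sum_(0 <= g < l.+1) step g c.
Proof.
rewrite mxE; under eq_bigr do rewrite !mxE.
rewrite -(big_mkord xpredT (fun g => (g <= l)%N%:R * step g c)).
rewrite (big_cat_nat _ (n := l.+1)) //= [X in _ + X]big_nat_cond [X in _ + X]big1.
  rewrite addr0 big_nat_cond [RHS]big_nat_cond.
  by apply: eq_bigr => g /andP[/andP[_]]; rewrite ltnS => -> _; rewrite mul1r.
by move=> g /andP[/andP[lg _] _]; rewrite leqNgt lg mul0r.
Qed.

(* Summed over both sides of [u], [step g] is [(atv g.-1 == u) - (atv g == u)]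
   (without first term for [g = 0]), which telescopes. *)
Lemma step_telescope l u :
  \sum_(0 <= g < l.+1) (step g (lshift n u) + step g (rshift n u)) = - (atv l == u)%:R.
Proof.
have sides x b : (side_col x b == lshift n u)%:R + (side_col x b == rshift n u)%:R
    = (x == u)%:R :> R.
  by rewrite side_col_lshift side_col_rshift; case: b; rewrite ?andbT ?andbF ?addr0 ?add0r.
elim: l => [|l IHl]; first by rewrite big_nat1 /step !sub0r -opprD sides.
by rewrite big_nat_recr //= IHl /step addrACA sides -opprD sides addrA addNr add0r.
Qed.

Definition side_sum_mx : 'M[R]_N := incidence_mx
  (fun r => if split r is inl j then Some (lshift n j) else None)
  (fun r => Some (rshift n (match split r with inl j => j | inr j => j end))).

Lemma split_lshift (j : 'I_n) : split (lshift n j) = inl j.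
Proof. exact: (@unsplitK n n (inl j)). Qed.

Lemma split_rshift (j : 'I_n) : split (rshift n j) = inr j.
Proof. exact: (@unsplitK n n (inr j)). Qed.

Lemma mul_side_sum_mx_lshift (Y : 'M[R]_N) l w :
  (Y *m side_sum_mx) l (lshift n w) = Y l (lshift n w).
Proof.
rewrite mxE big_split_ord /= (bigD1 w) //= !big1 ?addr0.
- by rewrite !mxE split_lshift /= eqxx (inj_eq Some_inj) eq_shift subr0 mulr1.
- by move=> j _; rewrite !mxE split_rshift /= (inj_eq Some_inj) eq_shift subrr mulr0.
by move=> j /negbTE nj; rewrite !mxE split_lshift /= !(inj_eq Some_inj) !eq_shift nj subrr mulr0.
Qed.

Lemma mul_side_sum_mx_rshift (Y : 'M[R]_N) l u :
  (Y *m side_sum_mx) l (rshift n u) = - (Y l (lshift n u) + Y l (rshift n u)).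
Proof.
rewrite mxE big_split_ord /= (bigD1 u) //= big1 ?addr0 => [|j /negbTE nj]; last first.
  by rewrite !mxE split_lshift /= !(inj_eq Some_inj) !eq_shift nj subrr mulr0.
rewrite (bigD1 u) //= big1 ?addr0 => [|j /negbTE nj]; last first.
  by rewrite !mxE split_rshift /= !(inj_eq Some_inj) !eq_shift nj subrr mulr0.
rewrite !mxE split_lshift split_rshift /= !(inj_eq Some_inj) !eq_shift eqxx.
by rewrite sub0r !mulrN1 opprD.
Qed.

Definition path_mx : 'M[R]_N := prefix_mx *m step_mx *m side_sum_mx.

Lemma path_mx_lshift (l : 'I_N) w :
  path_mx l (lshift n w) = \sum_(0 <= g < l.+1) step g (lshift n w).
Proof. by rewrite mul_side_sum_mx_lshift prefix_stepE. Qed.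

Lemma path_mx_rshift (l : 'I_N) u : path_mx l (rshift n u) = (atv l == u)%:R.
Proof.
by rewrite mul_side_sum_mx_rshift !prefix_stepE -big_split /= step_telescope opprK.
Qed.

Definition segment_ends_mx : 'M[R]_N := incidence_mx
  (fun r => Some (match split r with inl v => jj v | inr u => ii u end))
  (fun r => if split r is inl v then Some (ii v) else None).

(* [segment_ends_mx *m path_mx] is block lower triangular, with diagonal blocks
   [segment_mx] and [1]. *)
Lemma det_segment_mx : sign_or_zero (\det segment_mx).
Proof.
set P := segment_ends_mx *m path_mx.
have ulP : ulsubmx P = segment_mx.
  apply/matrixP => v w; rewrite 2!mxE mul_incidence_mx [RHS]mxE split_lshift /= !path_mx_lshift.
  rewrite (big_cat_nat _ (n := (ii v).+1) (m := 0) (p := (jj v).+1)) ?ltnS //=.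
  rewrite [X in X - _]addrC addrK big_add1.
  by apply: eq_bigr => l _; rewrite /step !side_col_lshift.
have urP : ursubmx P = 0.
  apply/matrixP => v u; rewrite 2!mxE mul_incidence_mx [RHS]mxE split_lshift /= !path_mx_rshift.
  by rewrite atv_ii atv_jj subrr.
have drP : drsubmx P = 1%:M.
  apply/matrixP => v u; rewrite 2!mxE mul_incidence_mx [RHS]mxE split_rshift /= path_mx_rshift.
  by rewrite atv_ii subr0.
have -> : \det segment_mx = \det P.
  by rewrite -(submxK P) ulP urP drP det_lblock det1 mulr1.
rewrite !det_mulmx det_prefix_mx mul1r step_mx_incidence.
by apply: sign_or_zeroM; [|apply: sign_or_zeroM]; apply: det_incidence_mx.
Qed.

End SegmentMatrix.

Section Delta.
Variables (H : finType) (D : {set H}) (o : {set {set H}} -> {set H}).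
Implicit Types (a b h : H) (S : {set H}).
Local Open Scope ring_scope.

Lemma setI_pair a b S : [set a; b] :&: S =
  (if a \in S then [set a] else set0) :|: (if b \in S then [set b] else set0).
Proof.
have set1I x : [set x] :&: S = if x \in S then [set x] else set0.
  by case: ifPn => xS; [apply/setIidPl; rewrite sub1set | apply/disjoint_setI0; rewrite disjoints1].
by rewrite setIUl !set1I.
Qed.

Lemma Delta_set1 e t h : e :&: o t = [set h] -> Delta D o e t = if h \in D then 1 else -1.
Proof.
have ex_set1 S : [exists h' in S, [set h] == [set h']] = (h \in S).
  apply/existsP/idP => [[h' /andP[hS /eqP/set1_inj ->]] // | hS].
  by exists h; rewrite hS eqxx.
by move=> eh; rewrite /Delta eh !ex_set1 inE; case: (h \in D).
Qed.

Lemma Delta_eq0 e t : #|e :&: o t| != 1%N -> Delta D o e t = 0.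
Proof.
move=> not1; rewrite /Delta.
by do 2 (case: existsP => [[h /andP[_ /eqP eh]]|_]; first by rewrite eh cards1 in not1).
Qed.

Lemma Delta_pair a b t : a != b -> (b \in D) = (a \notin D) ->
  (if a \in D then 1 else -1) * Delta D o [set a; b] t = (a \in o t)%:R - (b \in o t)%:R.
Proof.
move=> ab bD; have := setI_pair a b (o t).
case: (a \in o t); case: (b \in o t); rewrite ?setU0 ?set0U => E.
- by rewrite Delta_eq0 ?E ?cards2 ?ab ?mulr0 ?subrr.
- by rewrite (Delta_set1 E) subr0; case: (a \in D); rewrite ?mulr1 ?mulrNN.
- by rewrite (Delta_set1 E) bD sub0r; case: (a \in D); rewrite ?mulr1 ?mul1r.
- by rewrite Delta_eq0 ?E ?cards0 ?mulr0 ?subrr.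
Qed.

End Delta.

Section GraphFacts.
Variables (V H : finType) (Ed : {set {set H}}) (eps : H -> V).
Hypothesis HG : is_graph Ed.

Lemma Ed_card2 e : e \in Ed -> #|e| = 2.
Proof. by case: HG => _; apply. Qed.

Lemma Ed_eq_of_mem e1 e2 h : e1 \in Ed -> e2 \in Ed -> h \in e1 -> h \in e2 -> e1 = e2.
Proof.
case: HG => /and3P[_ triv _] _ e1_Ed e2_Ed h_e1 h_e2.
by rewrite -(def_pblock triv e1_Ed h_e1) (def_pblock triv e2_Ed h_e2).
Qed.

Lemma adj_edge a b : [set a; b] \in Ed -> adj Ed eps (eps a) (eps b).
Proof.
move=> ab_Ed; have ab : a != b by move: (Ed_card2 ab_Ed); rewrite cards2; case: (a != b).
apply/existsP; exists [set a; b]; rewrite ab_Ed /=.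
apply/existsP; exists a; rewrite !inE eqxx /=; apply/existsP; exists b.
by rewrite !inE eqxx orbT ab !eqxx.
Qed.

Lemma adj_sym : symmetric (adj Ed eps).
Proof.
suff adjC u w : adj Ed eps u w -> adj Ed eps w u by move=> u w; apply/idP/idP; apply: adjC.
case/existsP => e /andP[e_Ed /existsP[h /andP[h_e /existsP[h' /andP[h'_e /and3P[hh' hu h'w]]]]]].
apply/existsP; exists e; rewrite e_Ed /=; apply/existsP; exists h'; rewrite h'_e /=.
by apply/existsP; exists h; rewrite h_e /= eq_sym hh' hu h'w.
Qed.

End GraphFacts.

Section CMDelta.
Variables (V H : finType) (Ed : {set {set H}}) (D : {set H}).
Hypotheses (HG : is_graph Ed) (HD : directed_version Ed D).
Local Open Scope ring_scope.

Lemma natr_count (R : nzSemiRingType) (T : Type) (p : pred T) (s : seq T) :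
  (count p s)%:R = \sum_(x <- s) (p x)%:R :> R.
Proof. by elim: s => [|x s IHs]; rewrite ?big_nil ?big_cons //= natrD IHs. Qed.

Lemma Ed_pair_tail a b : [set a; b] \in Ed -> a != b /\ (b \in D) = (a \notin D).
Proof.
move=> abE; have := Ed_card2 HG abE; rewrite cards2; case: eqP => //= /eqP ab _.
split=> //; move: (HD abE); rewrite setI_pair.
case: (a \in D); case: (b \in D); rewrite ?setU0 ?set0U ?cards1 ?cards0 //.
by rewrite cards2 ab.
Qed.

Lemma CMDelta_trav (Gam : V -> seq (H * H)) o v t :
  {in trav (Gam v), forall q, [set q.1; q.2] \in Ed} ->
  CMDelta Ed D Gam o v t = \sum_(q <- trav (Gam v)) ((q.1 \in o t)%:R - (q.2 \in o t)%:R).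
Proof.
move=> trav_Ed; rewrite /CMDelta /CM /sigma.
have signed (A B : bool) :
  (A && B)%:R - (A && ~~ B)%:R = A%:R * (if B then 1 else -1) :> rat.
  by case: A; case: B; rewrite ?subr0 ?sub0r ?mul1r ?mul0r ?subrr.
under eq_bigr => e _.
  rewrite !natr_count -sumrB big_distrl /=.
  under eq_bigr => q _ do rewrite signed.
  over.
rewrite exchange_big /=; apply: eq_big_seq => q /trav_Ed qE.
rewrite (bigD1 [set q.1; q.2]) //= eqxx mul1r big1 ?addr0 => [|e /andP[_ /negbTE eq]]; last first.
  by rewrite eq_sym eq !mul0r.
by have [ab bD] := Ed_pair_tail qE; apply: Delta_pair.
Qed.

End CMDelta.

Section Sequences.
Variables (T : Type) (x0 : T).

Lemma nth_rot (s : seq T) r i : r <= size s -> i < size s ->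
  nth x0 (rot r s) i = nth x0 s ((r + i) %% size s).
Proof.
move=> r_le i_lt; rewrite /rot nth_cat size_drop.
case: ltnP => i_r; first by rewrite nth_drop modn_small //; lia.
rewrite nth_take; last by lia.
have -> : (r + i = (i - (size s - r)) + size s)%N by lia.
by rewrite modnDr modn_small //; lia.
Qed.

(* A cyclic window of [s] that avoids position [c] does not wrap around the end
   of the rotation of [s] that starts just after [c]. *)
Lemma rot_window_avoiding (s : seq T) r c k :
  r <= size s -> c < size s -> (forall l, l < k -> (r + l) %% size s != c) ->
  exists2 i, i + k < size s &
    forall l, l <= k -> nth x0 (rot r s) l = nth x0 (rot c.+1 s) (i + l).
Proof.
move=> r_le c_lt avoid; set m := size s in r_le c_lt avoid *.
have m_gt0 : 0 < m by lia.
pose i := ((r + m - c.+1) %% m)%N.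
have shift x : ((c.+1 + (i + x)) %% m = (r + x) %% m)%N.
  rewrite /i addnCA modnDml.
  have -> : ((r + m - c.+1) + (c.+1 + x) = (r + x) + m)%N by lia.
  by rewrite modnDr.
have i_lt : i < m by rewrite ltn_pmod.
have ik_lt : i + k < m.
  rewrite ltnNge; apply/negP => mk; have /avoid : m.-1 - i < k by lia.
  rewrite -shift (_ : (c.+1 + (i + (m.-1 - i)) = c + m)%N); last by lia.
  by rewrite modnDr modn_small // eqxx.
exists i => // l l_le.
by rewrite !nth_rot ?shift //; lia.
Qed.

End Sequences.

Lemma flatten_window (T : eqType) (x0 : T) (ss : seq (seq T)) s : s \in ss ->
  exists2 off, off + size s <= size (flatten ss) &
    forall y, y < size s -> nth x0 (flatten ss) (off + y) = nth x0 s y.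
Proof.
case/splitPr => ss1 ss2; exists (size (flatten ss1)).
  by rewrite flatten_cat size_cat /= size_cat leq_add2l leq_addr.
by move=> y y_lt; rewrite flatten_cat nth_cat ltnNge leq_addr /= addKn /= nth_cat y_lt.
Qed.

Lemma eq_of_count_eq1 (T : eqType) (a : pred T) s x y :
  count a s = 1%N -> x \in s -> y \in s -> a x -> a y -> x = y.
Proof.
rewrite -size_filter; case def_s: (filter a s) => [|z [|]] //= _ x_s y_s ax ay.
have : x \in filter a s by rewrite mem_filter ax.
have : y \in filter a s by rewrite mem_filter ay.
by rewrite def_s !inE => /eqP -> /eqP ->.
Qed.

Section Walks.
Variable H : finType.
Implicit Types (s : seq (H * H)) (p : H * H).

Lemma size_trav s : size (trav s) = size s.
Proof. by rewrite /trav size_map size_zip size_rot minnn. Qed.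

Lemma nth_trav s d p i : i < size s ->
  nth d (trav s) i = ((nth p s i).2, (nth p s (i.+1 %% size s)).1).
Proof.
move=> i_lt; rewrite /trav (nth_map (p, p)); last by rewrite size_zip size_rot minnn.
by rewrite nth_zip ?size_rot //= nth_rot //; case: (size s) i_lt.
Qed.

Lemma size_hedges s : size (hedges s) = (2 * size s)%N.
Proof. by elim: s => [|p s IHs] //=; rewrite IHs; lia. Qed.

Lemma hedges_transition s h :
  h \in hedges s -> exists2 p, p \in s & h = p.1 \/ h = p.2.
Proof.
by case/flattenP => _ /mapP[p p_s ->]; rewrite !inE => /orP[]/eqP ->; exists p; auto.
Qed.

Lemma hedges_trav s h : h \in hedges s -> exists2 q, q \in trav s & h = q.1 \/ h = q.2.
Proof.
case/hedges_transition => p p_s h_p; set m := size s.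
have m_gt0 : 0 < m by rewrite /m; case: (s) p_s.
have [x x_lt p_x] : exists2 x, x < m & p = nth p s x.
  by exists (index p s); rewrite ?index_mem ?nth_index.
have trav_at y : y < m -> nth p (trav s) y \in trav s by move=> y_lt; rewrite mem_nth ?size_trav.
have y_lt : (x + m.-1) %% m < m by rewrite ltn_pmod.
rewrite {}p_x in h_p; case: h_p => ->.
  exists (nth p (trav s) ((x + m.-1) %% m)); rewrite ?trav_at // (nth_trav _ p) //; right.
  by rewrite -addn1 modnDml -addnA addn1 prednK // modnDr (modn_small x_lt).
by exists (nth p (trav s) x); rewrite ?trav_at // (nth_trav _ p) //; left.
Qed.

Lemma trav_segment (R : seq (H * H)) k p0 pa pb :
  0 < k < size R -> nth p0 R 0 = pa -> nth p0 R k = pb ->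
  trav ((pb.1, pa.2) :: take k.-1 (drop 1 R)) =
  [seq ((nth p0 R l).2, (nth p0 R l.+1).1) | l <- iota 0 k].
Proof.
move=> /andP[k_gt0 k_lt] Ra Rb; set G := _ :: _.
have G_size : size G = k by rewrite /G /= size_take size_drop ifT; lia.
have nthG j : j < k -> nth p0 G j = if j == 0%N then (pb.1, pa.2) else nth p0 R j.
  by case: j => [|j] //= j_lt; rewrite nth_take ?nth_drop //; lia.
apply: (@eq_from_nth _ p0); first by rewrite size_trav size_map size_iota.
move=> i; rewrite size_trav G_size => i_lt.
rewrite (nth_trav p0 p0) ?G_size // (nth_map 0) ?size_iota // nth_iota // add0n nthG //.
congr (_, _); first by case: eqP => [->|] //=; rewrite Ra.
case: (ltngtP i.+1 k) => [i1_lt||i1_k]; [by rewrite modn_small // nthG | lia |].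
by rewrite i1_k modnn nthG // -Rb -i1_k.
Qed.

End Walks.

Section EulerSequence.
Variables (V H : finType) (Ed : {set {set H}}) (eps : H -> V).
Hypotheses (HG : is_graph Ed) (H4 : four_regular eps).
Variables (E : {set {set H}}) (C : seq (seq (H * H))).
Hypotheses (HE : based Ed eps E) (HC : euler_system Ed eps C).
Variable x0 : H.
Local Notation p0 := (x0, x0).

Lemma euler_circuit W : W \in C -> oriented_circuit Ed eps W.
Proof. by case: HC => circ _ _; apply: circ. Qed.

Lemma euler_transition W p : W \in C -> p \in W -> eps p.1 = eps p.2.
Proof. by move/euler_circuit => /and3P[/andP[/allP ds _] _ _] /ds /andP[_ /eqP]. Qed.

Lemma euler_trav_edge W q : W \in C -> q \in trav W -> [set q.1; q.2] \in Ed.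
Proof. by move/euler_circuit => /and3P[/andP[_ /allP tr] _ _] /tr. Qed.

Lemma euler_connect W x y : W \in C -> x < size W -> y < size W ->
  connect (adj Ed eps) (eps (nth p0 W x).1) (eps (nth p0 W y).1).
Proof.
move=> W_C; suff from0 z :
    z < size W -> connect (adj Ed eps) (eps (nth p0 W 0).1) (eps (nth p0 W z).1).
  move=> x_lt y_lt; apply: connect_trans (from0 _ y_lt).
  by rewrite (sym_connect_sym (@adj_sym _ _ Ed eps)) from0.
elim: z => [|z IHz] z_lt; first exact: connect0.
apply: connect_trans (IHz (ltnW z_lt)) (connect1 _).
have z_trav : nth p0 (trav W) z \in trav W by rewrite mem_nth // size_trav ltnW.
have := adj_edge eps HG (euler_trav_edge W_C z_trav).
rewrite (nth_trav _ p0 (ltnW z_lt)) (modn_small z_lt) /=.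
by rewrite (euler_transition W_C (mem_nth _ (ltnW z_lt))).
Qed.

(* The Euler circuit through [p] is the only circuit of [C] in the component of
   [p], so it traverses the edge of [E] of that component. *)
Lemma euler_has_based_edge W p : W \in C -> p \in W ->
  has (fun q => [set q.1; q.2] \in E) (trav W).
Proof.
move=> W_C p_W; case: HE => E_sub E_based; case: HC => _ C_perm C_count.
have /eqP/cards1P[e0 e0_def] := E_based (eps p.1).
have : e0 \in [set e in E | edge_in_comp Ed eps e (eps p.1)] by rewrite e0_def set11.
rewrite inE => /andP[e0_E /existsP[h /andP[h_e0 h_conn]]].
have : h \in flatten [seq hedges W0 | W0 <- C] by rewrite (perm_mem C_perm) mem_enum.
case/flattenP => _ /mapP[W' W'_C ->] h_W'.
have [p' p'_W' h_p'] := hedges_transition h_W'.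
have p'_h : eps p'.1 = eps h by case: h_p' => ->; rewrite // (euler_transition W'_C p'_W').
have <- : W' = W.
  by apply: (eq_of_count_eq1 (C_count (eps p.1))) => //; apply/hasP;
     [exists p'; rewrite // p'_h | exists p; rewrite // connect0].
have [q q_W' h_q] := hedges_trav h_W'.
apply/hasP; exists q; rewrite // (_ : [set q.1; q.2] = e0) //.
apply: (Ed_eq_of_mem HG (euler_trav_edge W'_C q_W') (subsetP E_sub _ e0_E) _ h_e0).
by case: h_q => ->; rewrite !inE eqxx ?orbT.
Qed.

Definition cut_index (W : seq (H * H)) : nat := find (fun q => [set q.1; q.2] \in E) (trav W).

Lemma cut_index_based W x v : W \in C -> x < size W -> eps (nth p0 W x).1 = v ->
  let q := nth p0 (trav W) (cut_index W) in
  [/\ cut_index W < size W, [set q.1; q.2] \in E & edge_in_comp Ed eps [set q.1; q.2] v].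
Proof.
move=> W_C x_lt Wx_v /=; have has_E := euler_has_based_edge W_C (mem_nth p0 x_lt).
have c_lt : cut_index W < size W by rewrite -size_trav -has_find.
split=> //; first exact: (nth_find p0 has_E).
apply/existsP; exists (nth p0 (trav W) (cut_index W)).1; rewrite !inE eqxx /=.
rewrite (nth_trav _ p0) //= -(euler_transition W_C (mem_nth p0 c_lt)) -Wx_v.
by apply: euler_connect; rewrite ?ltn_pmod.
Qed.

Definition cut_circuit (W : seq (H * H)) : seq (H * H) := rot (cut_index W).+1 W.

Definition euler_seq : seq (H * H) := flatten [seq cut_circuit W | W <- C].

Lemma induced_window v G : induced_circuit Ed eps E C v G ->
  exists2 W, W \in C & exists i k, let R := cut_circuit W in
    [/\ 0 < k, i + k < size W,
        eps (nth p0 R i).1 = v /\ eps (nth p0 R (i + k)).1 = v,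
        trav G = [seq ((nth p0 R l).2, (nth p0 R l.+1).1) | l <- iota i k]
      & {in trav G, forall q, [set q.1; q.2] \in Ed}].
Proof.
move=> [W [W_C [r [k [pa [pb /= [k_bd [Rpa Rpb] [pa_v pb_v] G_def avoid]]]]]]].
move: k_bd; rewrite size_rot; set m := size W => k_bd; have /andP[k_gt0 k_lt] := k_bd.
have m_gt0 : 0 < m by lia.
set r' := minn r m; have r'_le : r' <= m by rewrite geq_minr.
have rot_r : rot r W = rot r' W := rot_minn r W.
have nthR l : l < m -> nth p0 (rot r W) l = nth p0 W ((r' + l) %% m).
  by move=> l_lt; rewrite rot_r nth_rot.
have Ra : nth p0 (rot r W) 0 = pa by move: Rpa; case: (rot r W) => // ? ? [].
have Rb : nth p0 (rot r W) k = pb.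
  by rewrite -[k]addn0 -nth_drop; move: Rpb; case: drop => // ? ? [].
have G_trav : trav G = [seq ((nth p0 (rot r W) l).2, (nth p0 (rot r W) l.+1).1) | l <- iota 0 k].
  by rewrite G_def; apply: trav_segment; rewrite ?size_rot.
have trW l : l < k ->
    ((nth p0 (rot r W) l).2, (nth p0 (rot r W) l.+1).1) = nth p0 (trav W) ((r' + l) %% m).
  move=> l_lt; rewrite (nth_trav _ p0) ?ltn_pmod ?nthR; try lia.
  by rewrite -[((r' + l) %% m).+1]addn1 modnDml addn1 addnS.
have G_edge : {in trav G, forall q, [set q.1; q.2] \in Ed}.
  move=> q; rewrite G_trav => /mapP[l]; rewrite mem_iota add0n => /andP[_ l_lt] ->.
  by rewrite trW //; apply: (euler_trav_edge W_C); rewrite mem_nth // size_trav ltn_pmod.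
have W_v : eps (nth p0 W ((r' + 0) %% m)).1 = v by rewrite -nthR // Ra.
have [c_lt c_E c_comp] := cut_index_based W_C (ltn_pmod _ m_gt0) W_v.
set c := cut_index W in c_lt c_E c_comp.
have avoid_c l : l < k -> (r' + l) %% m != c.
  move=> l_lt; apply/eqP => l_c.
  suff : nth p0 (trav W) c \in trav G by move/(allP (avoid _ c_E c_comp)); rewrite eqxx.
  by rewrite G_trav -l_c -trW // map_f // mem_iota.
have [i ik_lt RW] := rot_window_avoiding p0 r'_le c_lt avoid_c.
exists W => //; exists i, k; split=> //.
- by rewrite /cut_circuit -/c; split; [rewrite -[i]addn0 |]; rewrite -RW // -rot_r ?Ra ?Rb.
- have -> : iota i k = map (addn i) (iota 0 k) by rewrite -iotaDl addn0.
  rewrite G_trav -map_comp; apply/eq_in_map => l; rewrite mem_iota add0n => /andP[_ l_lt].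
  by rewrite /= /cut_circuit -/c -addnS -!RW // -?rot_r //; apply: ltnW.
Qed.

Definition euler_segment (v : V) (G : seq (H * H)) (a b : nat) : Prop :=
  [/\ a < b < size euler_seq,
    eps (nth p0 euler_seq a).1 = v /\ eps (nth p0 euler_seq b).1 = v,
    trav G = [seq ((nth p0 euler_seq l).2, (nth p0 euler_seq l.+1).1) | l <- iota a (b - a)]
  & {in trav G, forall q, [set q.1; q.2] \in Ed}].

Lemma induced_segment v G : induced_circuit Ed eps E C v G -> exists a b, euler_segment v G a b.
Proof.
case/induced_window => W W_C [i [k /= [k_gt0 ik_lt [Ri_v Rik_v] G_trav G_edge]]].
have [off off_le P_W] := flatten_window p0 (map_f cut_circuit W_C).
rewrite size_rot -/euler_seq in off_le P_W.
move: ik_lt off_le P_W; move: (size W) => m ik_lt off_le P_W.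
exists (off + i)%N, (off + i + k)%N; split=> //.
- apply/andP; split; first by clear -k_gt0; lia.
  by apply: leq_trans off_le; rewrite -addnA ltn_add2l.
- by rewrite -addnA !P_W //; clear -ik_lt; lia.
rewrite G_trav (_ : (off + i + k - (off + i) = k)%N) ?iotaDl; last by lia.
rewrite -map_comp; apply/eq_in_map => l; rewrite mem_iota => /andP[_ l_lt] /=.
by rewrite -addnS !P_W //; lia.
Qed.

Lemma card_half_edges : #|H| = (4 * #|V|)%N.
Proof.
rewrite -sum1_card (partition_big eps xpredT) //= (eq_bigr (fun _ => 4%N)).
  by rewrite sum_nat_const mulnC.
by move=> v _; rewrite sum1_card; have := H4 v; rewrite /hat cardsE.
Qed.

(* Each half-edge occurs once in [C] and each transition contains two of them. *)
Lemma size_euler_seq : size euler_seq = (#|V| + #|V|)%N.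
Proof.
case: HC => _ C_perm _.
have : size (flatten [seq hedges W | W <- C]) = (2 * size euler_seq)%N.
  rewrite /euler_seq; elim: (C) => [|W C' IHC] //=.
  by rewrite !size_cat IHC size_hedges -size_cat (size_rot (cut_index W).+1); lia.
by rewrite (perm_size C_perm) -cardE card_half_edges; lia.
Qed.

Lemma euler_seq_transition l : l < size euler_seq ->
  eps (nth p0 euler_seq l).1 = eps (nth p0 euler_seq l).2.
Proof.
move=> l_lt; have /flattenP[_ /mapP[W W_C ->]] := mem_nth p0 l_lt.
by rewrite mem_rot; apply: euler_transition.
Qed.

End EulerSequence.

Section TransversalMinor.
Variables (V H : finType) (Ed : {set {set H}}) (eps : H -> V).
Hypotheses (HG : is_graph Ed) (H4 : four_regular eps).
Variables (E : {set {set H}}) (C : seq (seq (H * H))) (D : {set H}).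
Hypotheses (HE : based Ed eps E) (HC : euler_system Ed eps C) (HD : directed_version Ed D).
Variables (o : {set {set H}} -> {set H}) (Gam : V -> seq (H * H)) (T : {set {set {set H}}}).
Hypotheses (Ho : trans_orientation eps o) (HGam : forall v, induced_circuit Ed eps E C v (Gam v))
  (HT : transversalT eps T).
Variable x0 : H.
Local Notation p0 := (x0, x0).
Local Notation P := (euler_seq E C).
Local Open Scope ring_scope.

Definition transT (v : V) : {set {set H}} := odflt set0 (tcol eps T v).

Lemma transTP v : tcol eps T v = Some (transT v) /\ trans_at eps (transT v) v.
Proof.
rewrite /transT /tcol; case: pickP => [t /andP[_ t_v] // | none].
case: HT => _ /(_ v); rewrite (_ : [set t in T | trans_at eps t v] = set0) ?cards0 //.
by apply/setP => t; rewrite !inE none.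
Qed.

Lemma orient_transT v h : h \in o (transT v) -> eps h = v.
Proof.
have [_ t_v] := transTP v; have o_t : o (transT v) \in transT v.
  by apply: Ho; apply/existsP; exists v.
case/andP: t_v => /and3P[/eqP t_cover _ _] _ h_o.
have : h \in cover (transT v) by apply/bigcupP; exists (o (transT v)).
by rewrite t_cover inE => /eqP.
Qed.

Definition selected (h : H) : bool := h \in o (transT (eps h)).

Lemma selected_at h v : (eps h == v) && selected h = (h \in o (transT v)).
Proof.
case: eqP => [<- // | h_v]; apply/esym/negP => /orient_transT.
exact: h_v.
Qed.

Lemma CMDelta_segment v w a b : (a <= b < size P)%N ->
  trav (Gam v) = [seq ((nth p0 P l).2, (nth p0 P l.+1).1) | l <- iota a (b - a)] ->
  {in trav (Gam v), forall q, [set q.1; q.2] \in Ed} ->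
  CMDelta Ed D Gam o v (transT w) =
  \sum_(a <= l < b) (((eps (nth p0 P l).1 == w) && selected (nth p0 P l).2)%:R
                     - ((eps (nth p0 P l.+1).1 == w) && selected (nth p0 P l.+1).1)%:R).
Proof.
move=> /andP[a_le b_lt] G_seg G_edge; rewrite (CMDelta_trav HG HD) //.
rewrite G_seg big_map /index_iota; apply: eq_big_seq => l.
rewrite mem_iota subnKC // => /andP[_ l_lt].
by rewrite (euler_seq_transition HC) ?(ltn_trans l_lt) // !selected_at.
Qed.

Lemma det_subCMDelta : sign_or_zero (\det (subCMDelta Ed eps D Gam o T)).
Proof.
set n := #|V|.
have [ab ab_spec] : exists ab : V -> nat * nat,
    forall v, euler_segment Ed eps E C x0 v (Gam v) (ab v).1 (ab v).2.
  apply: (fin_all_exists (P := fun v ab => euler_segment Ed eps E C x0 v (Gam v) ab.1 ab.2)) => v.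
  by have [a [b spec]] := induced_segment HG HE HC x0 (HGam v); exists (a, b).
have P_size : size P = (n + n)%N := size_euler_seq H4 E HC.
have ab_lt (x : 'I_n) : ((ab (enum_val x)).1 < n + n)%N && ((ab (enum_val x)).2 < n + n)%N.
  by case: (ab_spec (enum_val x)) => /andP[a_lt b_lt] _ _ _; rewrite -P_size b_lt (ltn_trans a_lt).
pose ii (x : 'I_n) := Ordinal (proj1 (andP (ab_lt x))).
pose jj (x : 'I_n) := Ordinal (proj2 (andP (ab_lt x))).
pose atv l := enum_rank (eps (nth p0 P l).1).
suff -> : subCMDelta Ed eps D Gam o T =
    segment_mx rat atv (fun l => selected (nth p0 P l).1) (fun l => selected (nth p0 P l).2) ii jj.
  apply: det_segment_mx => x; rewrite /atv /=; case: (ab_spec (enum_val x)) => //.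
  - by move=> /andP[/ltnW].
  - by move=> _ [-> _]; rewrite enum_valK.
  - by move=> _ [_ ->]; rewrite enum_valK.
apply/matrixP => x y; rewrite !mxE (transTP _).1.
case: (ab_spec (enum_val x)) => /andP[a_lt b_lt] _ G_seg G_edge.
rewrite (CMDelta_segment (enum_val y) _ G_seg G_edge); last by rewrite (ltnW a_lt) b_lt.
by apply: eq_bigr => l _; rewrite /atv !(can2_eq enum_rankK enum_valK).
Qed.

End TransversalMinor.

Local Open Scope ring_scope.

Theorem mainTheorem18 (V H : finType) (Ed : {set {set H}}) (eps : H -> V)
  (HG : is_graph Ed) (H4 : four_regular eps)
  (E : {set {set H}}) (HE : based Ed eps E)
  (C : seq (seq (H * H))) (HC : euler_system Ed eps C)
  (D : {set H}) (HD : directed_version Ed D)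
  (o : {set {set H}} -> {set H}) (Ho : trans_orientation eps o)
  (Gam : V -> seq (H * H))
  (HGam : forall v, induced_circuit Ed eps E C v (Gam v))
  (T : {set {set {set H}}}) (HT : transversalT eps T) :
  let A := subCMDelta Ed eps D Gam o T in
  \det A = -1 \/ \det A = 0 \/ \det A = 1.
Proof.
move=> A; have [V0 | V_gt0] := posnP #|V|.
  by clearbody A; move: A; rewrite V0 => A; rewrite det_mx00; do 2 right.
have /card_gt0P[x0 _] : (0 < #|H|)%N by rewrite (card_half_edges H4) muln_gt0.
exact: (det_subCMDelta HG H4 HE HC HD Ho HGam HT x0).
Qed.
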